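(* Let $N \ge 1$ and let $(\mathbf{x}_1,y_1),\dots,(\mathbf{x}_N,y_N)$ be labeled data points with labels in $\{1,\dots,C\}$. Let $\hat{P'}(y\mid\mathbf{x})$ and $\hat{P}(y\mid\mathbf{x};\theta_t)$ be conditional probability distributions over the labels, with $\hat{P}(y_i\mid\mathbf{x}_i;\theta_t) > 0$ for every $i$. Define the Dynamic Importance Loss $$\mathcal{L}_{\text{DIMP}}(\theta_t, D_Q) = -\frac{1}{N}\sum_{i=1}^{N} \frac{\hat{P'}(y_i\mid\mathbf{x}_i)}{\hat{P}(y_i\mid\mathbf{x}_i;\theta_t)} \log \hat{P}(y_i\mid\mathbf{x}_i;\theta_t).$$ Then $$\mathcal{L}_{\text{DIMP}}(\theta_t, D_Q) \ \ge\ -\frac{2}{N}\sum_{i=1}^{N}\hat{P'}(y_i\mid\mathbf{x}_i)\log \hat{P}(y_i\mid\mathbf{x}_i;\theta_t) \;+\; \frac{1}{N}\sum_{i=1}^{N}\hat{P}(y_i\mid\mathbf{x}_i;\theta_t)\log \hat{P}(y_i\mid\mathbf{x}_i;\theta_t).$$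
   Context: $D_Q=\{(\mathbf{x}_i,y_i)\}_{i=1}^N$ is a (synthetic) training set. $\hat{P'}(y\mid\mathbf{x})$ is a fixed classifier's predicted probability of label $y$ given input $\mathbf{x}$ (trained on a small real-world dataset), and $\hat{P}(y\mid\mathbf{x};\theta_t)$ is the predicted probability of the model being trained, with parameters $\theta_t$ at optimization step $t$. $\log$ denotes the natural logarithm. *)

From mathcomp Require Import all_boot all_order all_algebra.
From mathcomp Require Import reals exp.
Set Implicit Arguments. Unset Strict Implicit. Unset Printing Implicit Defensive.
Import Order.TTheory GRing.Theory Num.Theory.
Local Open Scope ring_scope.

Definition cond_distr (R : realType) (X : Type) (C : nat) (P : X -> 'I_C -> R) : Prop :=
  (forall x c, 0 <= P x c) /\ (forall x, \sum_(c < C) P x c = 1).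

Definition DIMP_loss (R : realType) (X Theta : Type) (C N : nat)
    (P' : X -> 'I_C -> R) (P : Theta -> X -> 'I_C -> R) (theta : Theta)
    (x : 'I_N -> X) (y : 'I_N -> 'I_C) : R :=
  - (N%:R^-1) * \sum_(i < N) (P' (x i) (y i) / P theta (x i) (y i)) * ln (P theta (x i) (y i)).

(* The bound holds termwise: with q := P'(y_i|x_i) in [0,1] and
   p := P(y_i|x_i;theta) in (0,1], it reads (-ln p) * (q/p - 2q + p) >= 0,
   where -ln p >= 0 and q/p - 2q + p = ((q - p)^2 + q(1 - q)) / p >= 0. *)
From mathcomp Require Import all_boot all_order all_algebra.
From mathcomp Require Import reals exp.
From mathcomp Require Import ring lra.
Set Implicit Arguments. Unset Strict Implicit. Unset Printing Implicit Defensive.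
Import Order.TTheory GRing.Theory Num.Theory.
Local Open Scope ring_scope.

Lemma cond_distr_le1 (R : realType) (X : Type) (C : nat) (P : X -> 'I_C -> R) :
  cond_distr P -> forall x c, P x c <= 1.
Proof.
move=> [P_ge0 P_sum1] x c; rewrite -(P_sum1 x) (bigD1 c) //= lerDl.
by apply: sumr_ge0 => i _; apply: P_ge0.
Qed.

Lemma mul2_le_divD (R : realFieldType) (p q : R) :
  0 < p -> 0 <= q <= 1 -> 2 * q <= q / p + p.
Proof.
move=> p_gt0 /andP[q_ge0 q_le1]; rewrite -subr_ge0.
have -> : q / p + p - 2 * q = ((q - p) ^+ 2 + q * (1 - q)) / p.
  by field; rewrite gt_eqF.
apply: divr_ge0; last exact: ltW.
by rewrite addr_ge0 ?sqr_ge0 // mulr_ge0 // subr_ge0.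
Qed.

Lemma DIMP_term_lower_bound (R : realType) (p q : R) :
  0 < p <= 1 -> 0 <= q <= 1 ->
  - 2 * (q * ln p) + p * ln p <= - ((q / p) * ln p).
Proof.
move=> /andP[p_gt0 p_le1] q01.
have lnp_le0 : ln p <= 0 := ln_le0 p_le1.
have := mul2_le_divD p_gt0 q01; nra.
Qed.

Theorem mainTheorem1 (R : realType) (X Theta : Type) (C N : nat)
    (P' : X -> 'I_C -> R) (P : Theta -> X -> 'I_C -> R) (theta : Theta)
    (x : 'I_N -> X) (y : 'I_N -> 'I_C) :
  (0 < N)%N ->
  cond_distr P' ->
  cond_distr (P theta) ->
  (forall i : 'I_N, 0 < P theta (x i) (y i)) ->
  DIMP_loss P' P theta x y >=
    - (2%:R / N%:R) * \sum_(i < N) P' (x i) (y i) * ln (P theta (x i) (y i))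
    + N%:R^-1 * \sum_(i < N) P theta (x i) (y i) * ln (P theta (x i) (y i)).
Proof.
move=> _ P'_distr P_distr P_gt0; rewrite /DIMP_loss.
have [P'_ge0 _] := P'_distr.
have sum_bound :
    \sum_(i < N) (- 2 * (P' (x i) (y i) * ln (P theta (x i) (y i)))
                  + P theta (x i) (y i) * ln (P theta (x i) (y i)))
    <= \sum_(i < N) - ((P' (x i) (y i) / P theta (x i) (y i)) * ln (P theta (x i) (y i))).
  apply: ler_sum => i _; apply: DIMP_term_lower_bound.
  - by rewrite P_gt0 (cond_distr_le1 P_distr).
  - by rewrite P'_ge0 (cond_distr_le1 P'_distr).
rewrite big_split /= -!mulr_sumr sumrN in sum_bound.
have N_inv_ge0 : 0 <= N%:R^-1 :> R by rewrite invr_ge0 ler0n.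
have := ler_wpM2l N_inv_ge0 sum_bound; lra.
Qed.
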